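(* Let $\mathcal R_1=\{(0^m1^m,2^m):m\ge0\}\subseteq\{0,1\}^*\times\{2\}^*$. For every $\varepsilon>0$, $\mathcal R_1$ can be computed by a probabilistic finite state transducer with probability $1-\varepsilon$. $\mathcal R_1$ cannot be computed by a deterministic finite state transducer.
   Context: A probabilistic finite state transducer (pfst) is a tuple $T=(Q,\Sigma_1,\Sigma_2,V,f,q_0,Q_{\rm acc},Q_{\rm rej})$ with finite state set $Q$, finite input/output alphabets $\Sigma_1,\Sigma_2$, initial state $q_0$, disjoint accepting/rejecting sets $Q_{\rm acc},Q_{\rm rej}\subseteq Q$ (the other states are non-halting). For each $a\in\Sigma_1\cup\{\ddagger,\$\}$ ($\ddagger,\$$ are end markers) there is a stochastic $Q\times Q$ matrix $V_a$ and an output function $f_a:Q\to\Sigma_2^*$; $V_\$$ puts all probability on halting states. On input $v$ the machine reads $\ddagger v\$$; in state $q$ reading $a$ it appends $f_a(q)$ to the output tape and moves to state $p$ with probability $(V_a)_{qp}$; if $p$ is accepting (rejecting) it halts and accepts with the current output (rejects). $T(w|v)$ is the probability of accepting with output $w$ on input $v$. A deterministic finite state transducer (dfst) is a pfst all of whose matrix entries are $0$ or $1$. For $\alpha>1/2$, $T$ computes $\mathcal R\subseteq\Sigma_1^*\times\Sigma_2^*$ with probability $\alpha$ if for all $v,w$: $(v,w)\in\mathcal R\Rightarrow T(w|v)\ge\alpha$ and $(v,w)\notin\mathcal R\Rightarrow T(w|v)\le1-\alpha$. (A dfst computes $\mathcal R$ if it does so with some probability $\alpha>1/2$, equivalently $T(w|v)=1$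 iff $(v,w)\in\mathcal R$.) *)

From HB Require Import structures.
From mathcomp Require Import all_boot all_order all_algebra.
From mathcomp Require Import reals.
Set Implicit Arguments. Unset Strict Implicit. Unset Printing Implicit Defensive.
Import Order.TTheory GRing.Theory Num.Theory.
Local Open Scope ring_scope.

(* Tape symbols: input letters together with the end markers ‡ (LEnd) and $ (REnd). *)
Inductive sym (S : Type) := Sym of S | LEnd | REnd.
Arguments LEnd {S}. Arguments REnd {S}.

Record pfst (R : realType) (S1 S2 : finType) := Pfst {
  st : finType;
  q0 : st;
  Qacc : {set st};
  Qrej : {set st};
  V : sym S1 -> st -> st -> R;
  f : sym S1 -> st -> seq S2;
  pfst_disj : [disjoint Qacc & Qrej];
  pfst_ge0 : forall a q p, 0 <= V a q p;
  pfst_stoch : forall a q, \sum_(p : st) V a q p = 1;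
  pfst_end : forall q, \sum_(p in Qacc :|: Qrej) V REnd q p = 1 }.

Arguments q0 {R S1 S2} _.
Arguments Qacc {R S1 S2} _.
Arguments Qrej {R S1 S2} _.
Arguments V {R S1 S2} _ _ _ _.
Arguments f {R S1 S2} _ _ _.

Section Semantics.
Variables (R : realType) (S1 S2 : finType) (T : pfst R S1 S2).

Fixpoint run (s : seq (sym S1)) (q : st T) (out : seq S2) (w : seq S2) : R :=
  match s with
  | [::] => 0
  | a :: s' =>
      \sum_(p : st T) V T a q p *
        (if p \in Qacc T then ((out ++ f T a q) == w)%:R
         else if p \in Qrej T then 0
         else run s' p (out ++ f T a q) w)
  end.

Definition prob (w : seq S2) (v : seq S1) : R :=
  if q0 T \in Qacc T then (w == [::])%:R
  else if q0 T \in Qrej T then 0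
  else run (LEnd :: map (@Sym S1) v ++ [:: REnd]) (q0 T) [::] w.

Definition computes_with_prob (Rel : seq S1 -> seq S2 -> Prop) (alpha : R) : Prop :=
  forall v w, (Rel v w -> alpha <= prob w v) /\ (~ Rel v w -> prob w v <= 1 - alpha).

Definition is_dfst : Prop := forall a q p, V T a q p = 0 \/ V T a q p = 1.

Definition dfst_computes (Rel : seq S1 -> seq S2 -> Prop) : Prop :=
  is_dfst /\ exists alpha : R, 1 / 2 < alpha /\ computes_with_prob Rel alpha.

End Semantics.

(* R_1 = {(0^m 1^m, 2^m)}: input alphabet {0,1} = bool (false = 0, true = 1),
   output alphabet {2} = unit. *)
Definition R1 (v : seq bool) (w : seq unit) : Prop :=
  exists m : nat, v = nseq m false ++ nseq m true /\ w = nseq m tt.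

From HB Require Import structures.
From mathcomp Require Import all_boot all_order all_algebra.
From mathcomp Require Import reals.
From mathcomp Require Import lra zify.
Import Order.TTheory GRing.Theory Num.Theory.
Local Open Scope ring_scope.
Set Implicit Arguments. Unset Strict Implicit. Unset Printing Implicit Defensive.

(** A probabilistic transducer guesses a weight [j] in [{0, ..., n}] uniformly,
    checks that the input has the form [0^a 1^b], and keeps a counter modulo
    [n+1] to which each [0] adds [j] and each [1] adds [n+1-j], emitting a [2]
    at every wrap-around; it accepts iff the counter ends at [0].  On
    [0^m 1^m] every branch accepts with output [2^m], whereas for any other
    pair at most one branch accepts, because [j a + (n+1-j) b] determines [j]
    when [a <> b].  So the error is at most [1/(n+1)].

    A deterministic transducer has finitely many states, so after reading
    [‡ 0^i] and [‡ 0^j] for some [i < j] it is in the same state (or has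
    halted in the same way).  Since the output is unary, the runs on the
    common suffix [1^i $] then only differ by a shift of the output length,
    so it accepts [0^j 1^i] with some output with the same probability as it
    accepts [0^i 1^i] with output [2^i]. *)

Lemma sum_pred1_mul (R : pzSemiRingType) (I : finType) (i0 : I) (F : I -> R) :
  \sum_i (i == i0)%:R * F i = F i0.
Proof.
rewrite (bigD1 i0) //= eqxx mul1r big1 ?addr0 // => i /negbTE ->.
by rewrite mul0r.
Qed.

Lemma sum_pred1 (R : pzSemiRingType) (I : finType) (i0 : I) :
  \sum_i (i == i0)%:R = 1 :> R.
Proof.
rewrite -[RHS](sum_pred1_mul i0 (fun => 1)).
by apply: eq_bigr => i _; rewrite mulr1.
Qed.

Lemma sum_pred_le1 (R : numDomainType) (I : finType) (P : pred I) :
  {in P &, forall i j, i = j} -> \sum_i (P i)%:R <= 1 :> R.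
Proof.
move=> P_uniq; rewrite -natr_sum lern1.
rewrite (_ : (\sum_i P i)%N = #|P|).
  by apply/card_le1_eqP => i j Pi Pj; apply: P_uniq.
rewrite -sum1_card [RHS]big_mkcond.
by apply: eq_bigr => i _; rewrite unfold_in; case: (P i).
Qed.

Lemma exists_collision (T : finType) (g : nat -> T) :
  exists i j, (i < j)%N /\ g i = g j.
Proof.
have : ~~ injectiveb (fun i : 'I_#|T|.+1 => g i).
  by apply/injectiveP => /leq_card; rewrite card_ord ltnn.
case/injectivePn => i [j /negP neq_ij eq_g].
case: (ltngtP i j) => [lt_ij | lt_ji | eq_ij].
- by exists i, j.
- by exists j, i.
- by case: neq_ij; apply/eqP/val_inj.
Qed.

Section Run.
Variables (R : realType) (S1 S2 : finType) (T : pfst R S1 S2).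

Lemma run_point_mass a s q out w (p0 : st T) :
  (forall p, V T a q p = (p == p0)%:R) ->
  run (a :: s) q out w =
  (if p0 \in Qacc T then (out ++ f T a q == w)%:R
   else if p0 \in Qrej T then 0 else run s p0 (out ++ f T a q) w).
Proof.
move=> V_a_q /=; under eq_bigr do rewrite V_a_q.
exact: (sum_pred1_mul p0 (fun p => if p \in Qacc T then (out ++ f T a q == w)%:R
   else if p \in Qrej T then 0 else run s p (out ++ f T a q) w)).
Qed.

End Run.

Lemma eq_unit_seq (x y : seq unit) : (x == y) = (size x == size y).
Proof.
elim: x y => [|[] x IH] [|[] y] //=.
by rewrite eqseq_cons /= IH eqSS.
Qed.

Lemma run_unit_shift (R : realType) (S1 : finType) (T : pfst R S1 unit)
    s (q : st T) o w o' w' :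
  (size o + size w' = size o' + size w)%N -> run s q o w = run s q o' w'.
Proof.
elim: s q o o' => [|a s IH] q o o' eq_sizes //=; apply: eq_bigr => p _.
have eq_shifted : (size (o ++ f T a q) + size w' = size (o' ++ f T a q) + size w)%N.
  by rewrite !size_cat; lia.
case: ifP => _; last by case: ifP => // _; rewrite (IH _ _ _ eq_shifted).
rewrite !eq_unit_seq; congr (_ * (nat_of_bool _)%:R); move: eq_shifted.
move: (size (o ++ _)) (size (o' ++ _)) (size w) (size w') => m m' k k' eq_shifted.
by apply/idP/idP => /eqP ?; apply/eqP; lia.
Qed.

Section Deterministic.
Variables (R : realType) (S1 S2 : finType) (T : pfst R S1 S2).

Definition dnext a q : st T :=
  if [pick p | V T a q p == 1] is Some p then p else q.

Lemma V_dnext : is_dfst T -> forall a q p, V T a q p = (p == dnext a q)%:R.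
Proof.
move=> T_det a q; rewrite /dnext.
have row_sum := pfst_stoch a q.
case: pickP => [p1 /eqP V_p1 | no_one] p; last first.
  suff: \sum_p V T a q p = 0 by rewrite row_sum => /eqP; rewrite oner_eq0.
  apply: big1 => p'; case: (T_det a q p') => // V_p'.
  by move: (no_one p'); rewrite V_p' eqxx.
case: (eqVneq p p1) => [-> // | neq_p].
case: (T_det a q p) => // V_p; exfalso.
have : V T a q p1 + V T a q p <= \sum_p V T a q p.
  rewrite (bigD1 p1) //= (bigD1 p) ?neq_p //= lerD2l lerDl.
  by apply: sumr_ge0 => *; apply: pfst_ge0.
by rewrite V_p1 V_p row_sum gerDl ler10.
Qed.

Inductive config := Running of st T & seq S2 | Accepted of seq S2 | Rejected.

Definition config_state (c : config) : option (option (st T)) :=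
  match c with
  | Running q _ => Some (Some q) | Accepted _ => Some None | Rejected => None
  end.

Definition dstep (c : config) a : config :=
  if c is Running q o then
    let p := dnext a q in let o' := o ++ f T a q in
    if p \in Qacc T then Accepted o' else if p \in Qrej T then Rejected else Running p o'
  else c.

Definition dwalk := foldl dstep.

Definition run_from (c : config) s w : R :=
  match c with Running q o => run s q o w | Accepted o => (o == w)%:R | Rejected => 0 end.

Definition init_config : config :=
  if q0 T \in Qacc T then Accepted [::]
  else if q0 T \in Qrej T then Rejected else Running (q0 T) [::].

Lemma prob_run_from v w :
  prob T w v = run_from init_config (LEnd :: map (@Sym S1) v ++ [:: REnd]) w.
Proof.
rewrite /prob /init_config; case: ifP => _; first by rewrite /= eq_sym.
by case: ifP.
Qed.

Lemma run_from_cat c s s' w :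
  is_dfst T -> run_from c (s ++ s') w = run_from (dwalk c s) s' w.
Proof.
move=> T_det; elim: s c => [|a s IH] c //=; rewrite -IH.
case: c => [q o|o|] //=.
move: (run_point_mass (s ++ s') o w (V_dnext T_det a q)) => /= ->.
by case: ifP => //; case: ifP.
Qed.

Lemma dwalk_Accepted s o : dwalk (Accepted o) s = Accepted o.
Proof. by elim: s. Qed.

Lemma dwalk_Rejected s : dwalk Rejected s = Rejected.
Proof. by elim: s. Qed.

Lemma dwalk_output_size s q o q' o' :
  dwalk (Running q o) s = Running q' o' -> (size o <= size o')%N.
Proof.
elim: s q o => [|a s IH] q o /=; first by case=> _ <-.
case: ifP => _; first by rewrite dwalk_Accepted.
case: ifP => _; first by rewrite dwalk_Rejected.
by move/IH; apply: leq_trans; rewrite size_cat leq_addr.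
Qed.

End Deterministic.

Lemma run_from_same_state (R : realType) (S1 : finType) (T : pfst R S1 unit)
    (c : config T) s c' s' w :
  dwalk c s = c' -> config_state c = config_state c' ->
  exists w', run_from c' s' w' = run_from c s' w.
Proof.
case: c => [q o|o|] <-; last by rewrite dwalk_Rejected; exists w.
- case E: (dwalk _ s) => [q' o'|o'|] //= [<-].
  have le_o := dwalk_output_size E.
  exists (nseq (size o' + size w - size o) tt).
  by apply: run_unit_shift; rewrite size_nseq; lia.
- by rewrite dwalk_Accepted; exists w.
Qed.

Lemma R1_not_dfst (R : realType) (T : pfst R bool unit) : ~ dfst_computes T R1.
Proof.
case=> T_det [al [al_gt Tc]].
pose c k := dwalk (init_config T) (LEnd :: nseq k (Sym false)).
have [i [j [lt_ij same_state]]] := exists_collision (fun k => config_state (c k)).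
pose tail := map (@Sym bool) (nseq i true) ++ [:: REnd].
have prob_c k w : prob T w (nseq k false ++ nseq i true) = run_from (c k) tail w.
  by rewrite prob_run_from -run_from_cat // map_cat -catA map_nseq.
have c_j : dwalk (c i) (nseq (j - i) (Sym false)) = c j.
  by rewrite /c /dwalk -foldl_cat cat_cons -nseqD subnKC // ltnW.
have [w' eq_w'] := run_from_same_state tail (nseq i tt) c_j same_state.
have accept : al <= prob T (nseq i tt) (nseq i false ++ nseq i true).
  by apply: (Tc _ _).1; exists i.
have reject : prob T w' (nseq j false ++ nseq i true) <= 1 - al.
  apply: (Tc _ _).2 => -[m [eq_v _]].
  have := congr1 (count negb) eq_v; have := congr1 (count id) eq_v.
  by rewrite !count_cat !count_nseq /=; lia.
by move: accept reject; rewrite !prob_c eq_w'; lra.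
Qed.

Section CounterTransducer.
Variables (R : realType) (n : nat).

(* [inl None] is the start state, [inl (Some b)] halts and accepts iff [b],
   and [inr (j, x, c)] records the guessed weight [j], the last letter [x]
   read ([false] initially) and the counter [c] modulo [n+1]. *)
Local Notation state := (option bool + ('I_n.+1 * bool * 'I_n.+1))%type.

Definition weight (j : 'I_n.+1) (x : bool) : nat := if x then (n.+1 - j)%N else j.

Definition total_weight (j : 'I_n.+1) (v : seq bool) : nat :=
  (j * count negb v + (n.+1 - j) * count id v)%N.

Definition counter_next (a : sym bool) (q : state) : state :=
  match q, a with
  | inr (j, y, c), Sym x =>
      if y ==> x then inr (j, x, inZp (c + weight j x)) else inl (Some false)
  | inr (_, _, c), REnd => inl (Some (c == 0 :> nat))
  | _, _ => inl (Some false)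
  end.

Definition counter_out (a : sym bool) (q : state) : seq unit :=
  if (q, a) is (inr (j, _, c), Sym x) then nseq ((c + weight j x) %/ n.+1) tt else [::].

Definition start_distr (p : state) : R :=
  \sum_(j < n.+1) (p == inr (j, false, ord0))%:R / n.+1%:R.

Definition counter_V (a : sym bool) (q p : state) : R :=
  if (q, a) is (inl None, LEnd) then start_distr p else (p == counter_next a q)%:R.

Lemma counter_V_ge0 a q p : 0 <= counter_V a q p.
Proof.
rewrite /counter_V; case: q a => [[[]|]|] [] //=.
by apply: sumr_ge0 => j _; rewrite divr_ge0.
Qed.

Lemma counter_V_stoch a q : \sum_p counter_V a q p = 1.
Proof.
rewrite /counter_V; case: q a => [[[]|]|] [] //= *; rewrite ?sum_pred1 //.
rewrite /start_distr exchange_big /=.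
under eq_bigr do rewrite -mulr_suml sum_pred1 mul1r.
by rewrite sumr_const card_ord -[_ *+ n.+1]mulr_natl mulfV // pnatr_eq0.
Qed.

Lemma counter_V_end q :
  \sum_(p in [set inl (Some true)] :|: [set inl (Some false)]) counter_V REnd q p = 1.
Proof.
have halts : counter_next REnd q \in [set inl (Some true)] :|: [set inl (Some false)].
  case: q => [?|[[j y] c]]; rewrite !inE /= ?eqxx //.
  by case: (_ == 0%N); rewrite eqxx ?orbT.
have V_end p : counter_V REnd q p = (p == counter_next REnd q)%:R.
  by case: q {halts} => [[]|].
under eq_bigr do rewrite V_end.
by rewrite (bigD1 (counter_next REnd q)) //= eqxx big1 ?addr0 // => p /andP[_ /negbTE ->].
Qed.

Lemma counter_halt_disjoint :
  [disjoint [set inl (Some true)] & [set inl (Some false)] :> {set state}].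
Proof. by rewrite disjoints1 inE. Qed.

Definition counter_pfst : pfst R bool unit :=
  @Pfst R bool unit state (inl None) [set inl (Some true)] [set inl (Some false)]
    counter_V counter_out counter_halt_disjoint
    counter_V_ge0 counter_V_stoch counter_V_end.

Lemma V_counter_running a (r : 'I_n.+1 * bool * 'I_n.+1) p :
  V counter_pfst a (inr r) p = (p == counter_next a (inr r))%:R.
Proof. by []. Qed.

Lemma run_counter_branch (j : 'I_n.+1) y (c : 'I_n.+1) v out w :
  run (T := counter_pfst) (map (@Sym bool) v ++ [:: REnd]) (inr (j, y, c)) out w =
  (path implb y v && (n.+1 %| c + total_weight j v)%N
     && (out ++ nseq ((c + total_weight j v) %/ n.+1) tt == w))%:R.
Proof.
elim: v y c out => [|x v IH] y c out.
  rewrite (run_point_mass _ _ _ (V_counter_running _ _)) !inE.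
  rewrite /total_weight /dvdn /= !muln0 !addn0 modn_small // divn_small // cats0.
  by case: (_ == 0%N); rewrite ?eqxx.
rewrite map_cons cat_cons (run_point_mass _ _ _ (V_counter_running _ _)) !inE /=.
case: (y ==> x) => //=.
have tw_cons : (c + total_weight j (x :: v) = c + weight j x + total_weight j v)%N.
  by rewrite /total_weight /weight; case: x => /=; lia.
have carry k : (k %/ n.+1 + (k %% n.+1 + total_weight j v) %/ n.+1
                 = (k + total_weight j v) %/ n.+1)%N.
  by rewrite [in RHS](divn_eq k n.+1) -[in RHS]addnA divnMDl.
by rewrite IH tw_cons /dvdn /= modnDml -catA -nseqD carry.
Qed.

Lemma path_implb_shape y v : path implb y v ->
  v = nseq (count negb v) false ++ nseq (count id v) true /\ (y -> count negb v = 0%N).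
Proof.
elim: v y => [|x v IH] y //= /andP[y_x /IH[shape_v no_zero]].
case: x y_x no_zero => /= [_ /(_ isT) no_zero | /implyP y_x _].
  by rewrite no_zero {1}shape_v no_zero !add0n /=; split.
split=> [|/y_x //]; first by rewrite {1}shape_v.
Qed.

Lemma path_implb_nseq a b : path implb false (nseq a false ++ nseq b true).
Proof.
elim: a => [|a IH] //=.
by case: b => //= b; elim: b.
Qed.

Definition branch_accepts v w (j : 'I_n.+1) : bool :=
  path implb false v && (n.+1 %| total_weight j v)%N
    && (nseq (total_weight j v %/ n.+1) tt == w).

Lemma prob_counter_pfst v w :
  prob counter_pfst w v = n.+1%:R^-1 * \sum_(j < n.+1) (branch_accepts v w j)%:R.
Proof.
rewrite /prob /= !inE /= /counter_V /start_distr.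
under eq_bigr do rewrite mulr_suml.
rewrite exchange_big /= mulr_sumr; apply: eq_bigr => j _.
under eq_bigr do rewrite mulrAC.
by rewrite -mulr_suml sum_pred1_mul !inE /= run_counter_branch mulrC.
Qed.

Lemma total_weight_R1 j m :
  total_weight j (nseq m false ++ nseq m true) = (n.+1 * m)%N.
Proof.
rewrite /total_weight !count_cat !count_nseq /= mul1n mul0n addn0 add0n -mulnDl.
by rewrite subnKC // ltnW.
Qed.

Lemma total_weight_balanced (j1 j2 : 'I_n.+1) v :
  j1 != j2 -> total_weight j1 v = total_weight j2 v -> count negb v = count id v.
Proof.
move=> neq_j; have : (nat_of_ord j1 != j2) := neq_j.
rewrite /total_weight; have := ltn_ord j1; have := ltn_ord j2.
move: (nat_of_ord j1) (nat_of_ord j2) (count negb v) (count id v) => x y a b.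
by move=> lt_y lt_x /eqP neq_xy; nia.
Qed.

Lemma branch_accepts_unique v w :
  ~ R1 v w -> {in branch_accepts v w &, forall j1 j2, j1 = j2}.
Proof.
move=> not_R1 j1 j2 /andP[/andP[sorted_v /eqP mod1] /eqP out1].
move=> /andP[/andP[_ /eqP mod2] /eqP out2].
case: (eqVneq j1 j2) => // neq_j; case: not_R1.
have eq_tw : total_weight j1 v = total_weight j2 v.
  rewrite (divn_eq (total_weight j1 v) n.+1) (divn_eq (total_weight j2 v) n.+1) mod1 mod2.
  by rewrite -[(_ %/ _)%N](size_nseq _ tt) out1 -out2 size_nseq.
have [shape_v _] := path_implb_shape sorted_v.
have balanced := total_weight_balanced neq_j eq_tw.
exists (count id v); rewrite -out1 [in total_weight _ _]shape_v balanced.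
by rewrite total_weight_R1 mulKn //; split; rewrite // {1}shape_v balanced.
Qed.

End CounterTransducer.

Lemma R1_pfst (R : realType) (eps : R) :
  0 < eps -> exists T : pfst R bool unit, computes_with_prob T R1 (1 - eps).
Proof.
move=> eps_gt0; pose n := Num.Def.archi_bound eps^-1.
have inv_le_eps : n.+1%:R^-1 <= eps.
  have lt_n : eps^-1 < n.+1%:R.
    apply: (lt_le_trans (archi_boundP _)); first by rewrite invr_ge0 ltW.
    by rewrite ler_nat.
  by rewrite -(invrK eps) lef_pV2 ?posrE ?invr_gt0 // ltW.
exists (counter_pfst R n) => v w; rewrite prob_counter_pfst; split.
  case=> m [-> ->]; rewrite (eq_bigr (fun => 1)); last first.
    move=> j _; rewrite /branch_accepts path_implb_nseq total_weight_R1.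
    by rewrite dvdn_mulr // mulKn // eqxx.
  by rewrite sumr_const card_ord -mulr_natr mul1r mulVf ?pnatr_eq0 // gerBl ltW.
move=> /branch_accepts_unique /(sum_pred_le1 R) sum_le1.
rewrite (_ : 1 - (1 - eps) = eps); last by lra.
by apply: le_trans inv_le_eps; rewrite ler_piMr // invr_ge0.
Qed.

Unset Implicit Arguments.

Theorem theorem4 (R : realType) :
  (forall eps : R, 0 < eps ->
     exists T : pfst R bool unit, computes_with_prob T R1 (1 - eps)) /\
  ~ (exists T : pfst R bool unit, dfst_computes T R1).
Proof. by split; [exact: R1_pfst | case=> T; exact: R1_not_dfst]. Qed.
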